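(* Let $m\ge2$ be an integer, let $B\subseteq m\mathbb Z$ be an infinite set, and let $F\subseteq\mathbb Z$ be a finite nonempty set all of whose elements are congruent to $\tilde f$ modulo $m$, where $\tilde f\in\{1,\dots,m-1\}$. Suppose there exist an integer $n\ge1$ and sets $S_1,\dots,S_n$ with $S_1\cup\cdots\cup S_n=m\mathbb N\cup B$ such that for each $i$ there is $W_i\subseteq\mathbb Z$ with $m\mathbb Z\setminus S_i=F+W_i$. If \[m\ge \tilde f+2\tilde f\left\lfloor\frac{n+1}{\tilde f}\right\rfloor+\operatorname{mod}_{\tilde f}(n+1),\] then $C=m\mathbb N\cup B\cup F$ arises as a minimal additive complement in $\mathbb Z$.
   Context: $\mathbb N=\{0,1,2,\dots\}$, $m\mathbb N=\{mk:k\in\mathbb N\}$; $\operatorname{mod}_{a}n$ denotes the remainder of $n$ upon division by $a$. For $C,W\subseteq\mathbb Z$, $C+W=\{c+w:c\in C,w\in W\}$. $C$ is a minimal additive complement (MAC) to $W$ if $C+W=\mathbb Z$ and no proper subset $C'\subsetneq C$ satisfies $C'+W=\mathbb Z$. $C$ arises as a MAC if there exists $W\subseteq\mathbb Z$ to which $C$ is a MAC. *)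

From Stdlib Require Import ZArith List.
Open Scope Z_scope.

Definition zset := Z -> Prop.

Definition sumset (C W : zset) : zset :=
  fun z => exists c w, C c /\ W w /\ z = c + w.

Definition is_MAC (C W : zset) : Prop :=
  (forall z, sumset C W z) /\
  forall C' : zset,
    (forall x, C' x -> C x) -> (exists x, C x /\ ~ C' x) ->
    ~ (forall z, sumset C' W z).

Definition arises_as_MAC (C : zset) : Prop := exists W : zset, is_MAC C W.

Definition finite_set (A : zset) : Prop :=
  exists l : list Z, forall x, A x -> In x l.

Definition mult_nat (m : Z) : zset := fun x => exists k, 0 <= k /\ x = m * k.
Definition mult_int (m : Z) : zset := fun x => exists k, x = m * k.

From Stdlib Require Import ZArith List Lia Classical.
Open Scope Z_scope.

(* Write C0 = mN ∪ B ⊆ mZ; all of F lies in the class ft.  The complement W is built class by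
   class.  Each S_j gets two classes a_j, a_j + ft: W meets a_j + ft in one point only, which
   makes c ∈ S_j the unique representation of (a_j + ft) + c, while the a_j-part of W consists
   of the y whose translates y - (a_j + ft) + F miss S_j; since mZ \ S_j = F + W_j, these still
   cover every a_j + ft + g with g ∈ mZ \ C0.  F gets two classes x, u = x + ft: the class u
   is left empty and the x-part of W avoids only the collisions u + K f - f' (f ≠ f', K a large
   multiple of m), so u + K f is private to f.  The bound on m is exactly what is needed to
   place these n + 1 pairs disjointly in blocks of length 2 ft while keeping the class
   a_j - ft of one pivot j unused, so that a_j itself is covered by F + (unused class).  The
   other classes a_j are covered by C0 + W through very large elements of mN: either S_pivot
   contains every multiple of m below some bound, or no S_j does. *)

Lemma finite_set_max (A : zset) :
  finite_set A -> (exists a, A a) -> exists M, A M /\ forall a, A a -> a <= M.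
Proof.
  intros [l Hl]; revert A Hl.
  induction l as [|b l IH]; intros A Hl [a Aa].
  - destruct (Hl a Aa).
  - destruct (classic (exists a', A a' /\ a' <> b)) as [Hrest | Honly].
    + destruct (IH (fun z => A z /\ z <> b)) as [M [[AM _] HM]].
      * intros z [Az Hzb]. destruct (Hl z Az); [congruence | assumption].
      * exact Hrest.
      * destruct (classic (A b /\ M < b)) as [[Ab HMb] | HbM].
        -- exists b; split; [assumption |].
           intros z Az. destruct (Z.eq_dec z b) as [-> | Hzb]; [lia |].
           specialize (HM z (conj Az Hzb)); lia.
        -- exists M; split; [assumption |].
           intros z Az. destruct (Z.eq_dec z b) as [-> | Hzb]; [| exact (HM z (conj Az Hzb))].
           apply Z.nlt_ge; intro; apply HbM; auto.
    + assert (Honly' : forall z, A z -> z = b)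
        by (intros z Az; apply NNPP; intro; apply Honly; eauto).
      exists a; split; [assumption |].
      intros z Az. rewrite (Honly' z Az), (Honly' a Aa). lia.
Qed.

Lemma finite_set_min (A : zset) :
  finite_set A -> (exists a, A a) -> exists M, A M /\ forall a, A a -> M <= a.
Proof.
  intros [l Hl] [a Aa].
  destruct (finite_set_max (fun z => A (- z))) as [M [AM HM]].
  - exists (map Z.opp l). intros z Az.
    apply in_map_iff. exists (- z). split; [lia | auto].
  - exists (- a). rewrite Z.opp_involutive. assumption.
  - exists (- M). split; [assumption |].
    intros z Az. specialize (HM (- z)). rewrite Z.opp_involutive in HM.
    specialize (HM Az). lia.
Qed.

Lemma arises_as_MAC_ext (C C' : zset) :
  (forall z, C z <-> C' z) -> arises_as_MAC C -> arises_as_MAC C'.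
Proof.
  intros HC [W [Hcov Hmin]]. exists W. split.
  - intro z. destruct (Hcov z) as [c [w [Cc [Ww Hz]]]].
    exists c, w. split; [apply HC |]; auto.
  - intros C'' Hsub [c [Cc Hc]]. apply Hmin.
    + intros z Hz. apply HC, Hsub, Hz.
    + exists c. split; [apply HC |]; auto.
Qed.

Lemma is_MAC_of_private_points (C W : zset) :
  (forall z, sumset C W z) ->
  (forall c, C c -> exists z, forall c' w, C c' -> W w -> z = c' + w -> c' = c) ->
  is_MAC C W.
Proof.
  intros Hcov Hpriv. split; [exact Hcov |].
  intros C' Hsub [c [Cc HC'c]] Hcov'.
  destruct (Hpriv c Cc) as [z Hz].
  destruct (Hcov' z) as [c' [w [C'c' [Ww Hzw]]]].
  apply HC'c. rewrite <- (Hz c' w (Hsub c' C'c') Ww Hzw). assumption.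
Qed.

Lemma mult_int_mod (m z : Z) : mult_int m z -> z mod m = 0.
Proof. intros [k ->]. rewrite Z.mul_comm. apply Z_mod_mult. Qed.

Lemma mod_sub_multiple (m c z : Z) : c mod m = 0 -> (z - c) mod m = z mod m.
Proof. intros Hc. rewrite Zminus_mod, Hc, Z.sub_0_r, Zmod_mod. reflexivity. Qed.

Lemma mod_add_multiple (m c z : Z) : c mod m = 0 -> (z + c) mod m = z mod m.
Proof. intros Hc. rewrite Zplus_mod, Hc, Z.add_0_r, Zmod_mod. reflexivity. Qed.

Lemma mod_sub_residue (m ft f z : Z) : f mod m = ft -> (z - f) mod m = (z mod m - ft) mod m.
Proof. intros Hf. rewrite Zminus_mod, Hf. reflexivity. Qed.

Definition shift (m ft v : Z) : Z := (v + ft) mod m.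

Lemma shift_mod (m ft v : Z) : shift m ft v mod m = shift m ft v.
Proof. apply Zmod_mod. Qed.

Lemma unshift (m ft v : Z) : 0 <= v < m -> (shift m ft v - ft) mod m = v.
Proof.
  intros Hv. unfold shift. rewrite Zminus_mod_idemp_l.
  replace (v + ft - ft) with v by ring. apply Z.mod_small, Hv.
Qed.

Lemma shift_inj (m ft v v' : Z) :
  0 <= v < m -> 0 <= v' < m -> shift m ft v = shift m ft v' -> v = v'.
Proof. intros Hv Hv' Heq. rewrite <- (unshift m ft v), <- (unshift m ft v'), Heq; auto. Qed.

Record residue_layout (m ft lo hi x : Z) (a : Z -> Z) : Prop := {
  layout_x_range : 0 <= x < m;
  layout_a_range : forall j, lo <= j <= hi -> 0 <= a j < m;
  layout_a_inj : forall j k, lo <= j <= hi -> lo <= k <= hi -> a j = a k -> j = k;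
  layout_a_ne_x : forall j, lo <= j <= hi -> a j <> x;
  layout_x_ne_shift_x : x <> shift m ft x;
  layout_x_ne_shift_a : forall j, lo <= j <= hi -> x <> shift m ft (a j);
  layout_a_ne_shift_x : forall j, lo <= j <= hi -> a j <> shift m ft x;
  layout_a_ne_shift_a : forall j k, lo <= j <= hi -> lo <= k <= hi -> a j <> shift m ft (a k)
}.

Definition occupied (m ft lo hi x : Z) (a : Z -> Z) (v : Z) : Prop :=
  v = x \/ v = shift m ft x \/ exists j, lo <= j <= hi /\ (v = a j \/ v = shift m ft (a j)).

(* Every [y] of residue [v] is [c + w] with [c] in [C0] and [w - shift v + F] disjoint
   from [T]; such [w] belong to the complement built below. *)
Definition reachable (m ft : Z) (C0 F T : zset) (v : Z) : Prop :=
  forall y, y mod m = v ->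
  exists c, C0 c /\ forall f, F f -> ~ T (y - c - shift m ft v + f).

Section Construction.

Variables (m ft lo hi x fm fM : Z) (a : Z -> Z) (C0 F : zset) (T : Z -> zset).

Hypothesis m_pos : 0 < m.
Hypothesis C0_mod : forall c, C0 c -> c mod m = 0.
Hypothesis C0_nat : forall k, 0 <= k -> C0 (m * k).
Hypothesis F_mod : forall f, F f -> f mod m = ft.
Hypotheses (F_fm : F fm) (F_fM : F fM) (F_bounds : forall f, F f -> fm <= f <= fM).
Hypothesis layout : residue_layout m ft lo hi x a.
Hypothesis T_cover : forall c, C0 c -> exists j, lo <= j <= hi /\ T j c.
Hypothesis T_gap : forall j, lo <= j <= hi -> forall g, g mod m = 0 -> ~ C0 g ->
  exists f w, F f /\ g = f + w /\ forall f', F f' -> ~ T j (w + f').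
Hypothesis a_class : forall j, lo <= j <= hi ->
  ~ occupied m ft lo hi x a ((a j - ft) mod m) \/ reachable m ft C0 F (T j) (a j).

Local Notation sh := (shift m ft).
Local Notation C := (fun z => C0 z \/ F z).

Definition spread : Z := m * (2 * (fM - fm) + 1).

Definition collisions : zset :=
  fun z => exists f f', F f /\ F f' /\ f <> f' /\ z = sh x + spread * f - f'.

Definition complement : zset := fun y =>
  (exists j, lo <= j <= hi /\ y = sh (a j)) \/
  (exists j, lo <= j <= hi /\ y mod m = a j /\ forall f, F f -> ~ T j (y - sh (a j) + f)) \/
  (y mod m = x /\ ~ collisions y) \/
  ~ occupied m ft lo hi x a (y mod m).

Lemma mod_sub_F f z v : F f -> z mod m = sh v -> 0 <= v < m -> (z - f) mod m = v.
Proof. intros Ff Hz Hv. rewrite (mod_sub_residue m ft) by auto. rewrite Hz. apply unshift, Hv. Qed.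

Lemma complement_shift_a j w :
  lo <= j <= hi -> complement w -> w mod m = sh (a j) -> w = sh (a j).
Proof.
  intros Hj Hw Hwm.
  destruct Hw as [[k [Hk ->]] | [[k [Hk [Hwk _]]] | [[Hwx _] | Hfree]]].
  - rewrite shift_mod in Hwm.
    apply (shift_inj m ft) in Hwm; try apply (layout_a_range _ _ _ _ _ _ layout); auto.
    rewrite Hwm; reflexivity.
  - exfalso. apply (layout_a_ne_shift_a _ _ _ _ _ _ layout k j); congruence.
  - exfalso. apply (layout_x_ne_shift_a _ _ _ _ _ _ layout j); congruence.
  - exfalso. apply Hfree. right; right. exists j; auto.
Qed.

Lemma complement_a j w :
  lo <= j <= hi -> complement w -> w mod m = a j ->
  forall f, F f -> ~ T j (w - sh (a j) + f).
Proof.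
  intros Hj Hw Hwm.
  destruct Hw as [[k [Hk ->]] | [[k [Hk [Hwk HT]]] | [[Hwx _] | Hfree]]].
  - exfalso. rewrite shift_mod in Hwm. apply (layout_a_ne_shift_a _ _ _ _ _ _ layout j k); auto.
  - replace j with k; [exact HT |].
    apply (layout_a_inj _ _ _ _ _ _ layout); congruence.
  - exfalso. apply (layout_a_ne_x _ _ _ _ _ _ layout j); congruence.
  - exfalso. apply Hfree. right; right. exists j; auto.
Qed.

Lemma complement_x w : complement w -> w mod m = x -> ~ collisions w.
Proof.
  intros Hw Hwm.
  destruct Hw as [[k [Hk ->]] | [[k [Hk [Hwk _]]] | [[_ Hw] | Hfree]]].
  - rewrite shift_mod in Hwm. exfalso. apply (layout_x_ne_shift_a _ _ _ _ _ _ layout k); auto.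
  - exfalso. apply (layout_a_ne_x _ _ _ _ _ _ layout k); congruence.
  - exact Hw.
  - exfalso. apply Hfree. left; assumption.
Qed.

Lemma complement_not_shift_x w : complement w -> w mod m <> sh x.
Proof.
  intros Hw Hwm.
  destruct Hw as [[k [Hk ->]] | [[k [Hk [Hwk _]]] | [[Hwx _] | Hfree]]].
  - rewrite shift_mod in Hwm.
    apply (layout_a_ne_x _ _ _ _ _ _ layout k Hk).
    apply (shift_inj m ft); [apply (layout_a_range _ _ _ _ _ _ layout); auto
                            | apply (layout_x_range _ _ _ _ _ _ layout) | exact Hwm].
  - apply (layout_a_ne_shift_x _ _ _ _ _ _ layout k); congruence.
  - apply (layout_x_ne_shift_x _ _ _ _ _ _ layout); congruence.
  - apply Hfree. right; left; assumption.
Qed.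

Lemma spread_mod f : (spread * f) mod m = 0.
Proof. unfold spread. rewrite <- Z.mul_assoc, Z.mul_comm. apply Z_mod_mult. Qed.

Lemma private_point_C0 c0 : C0 c0 ->
  exists z, forall c w, C c -> complement w -> z = c + w -> c = c0.
Proof.
  intros Hc0. destruct (T_cover c0 Hc0) as [j [Hj HT]].
  assert (Haj := layout_a_range _ _ _ _ _ _ layout j Hj).
  exists (sh (a j) + c0). intros c w Hc Hw Hz.
  assert (Hzm : (sh (a j) + c0) mod m = sh (a j))
    by (rewrite mod_add_multiple, shift_mod; auto).
  destruct Hc as [Hc | Hc].
  - assert (Hwm : w mod m = sh (a j))
      by (replace w with (sh (a j) + c0 - c) by lia; rewrite mod_sub_multiple; auto).
    pose proof (complement_shift_a j w Hj Hw Hwm). lia.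
  - assert (Hwm : w mod m = a j)
      by (replace w with (sh (a j) + c0 - c) by lia; apply mod_sub_F; auto).
    exfalso. apply (complement_a j w Hj Hw Hwm c Hc).
    replace (w - sh (a j) + c) with c0 by lia. exact HT.
Qed.

Lemma private_point_F f0 : F f0 ->
  exists z, forall c w, C c -> complement w -> z = c + w -> c = f0.
Proof.
  intros Ff0. exists (sh x + spread * f0). intros c w Hc Hw Hz.
  assert (Hzm : (sh x + spread * f0) mod m = sh x)
    by (rewrite mod_add_multiple, shift_mod; auto using spread_mod).
  destruct Hc as [Hc | Hc].
  - exfalso. apply (complement_not_shift_x w Hw).
    replace w with (sh x + spread * f0 - c) by lia. rewrite mod_sub_multiple; auto.
  - destruct (Z.eq_dec c f0) as [| Hne]; [assumption | exfalso].
    apply (complement_x w Hw).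
    + replace w with (sh x + spread * f0 - c) by lia.
      apply mod_sub_F; auto. apply (layout_x_range _ _ _ _ _ _ layout).
    + exists f0, c. repeat split; auto. lia.
Qed.

(* As [spread > 2 (fM - fm)], the collisions representing [z - fM] and [z - fm] share their
   first element [g], which forces the second one of [z - fM] to be [fM]; the collision
   representing [z - g] is then [(g, g)]. *)
Lemma collisions_sparse z : exists f, F f /\ ~ collisions (z - f).
Proof.
  apply NNPP. intro Hnone.
  assert (Hall : forall f, F f -> collisions (z - f))
    by (intros f Ff; apply NNPP; intro; apply Hnone; eauto).
  assert (Hspread : 2 * (fM - fm) < spread)
    by (unfold spread; pose proof (F_bounds fm F_fm); nia).
  assert (Hzero : forall q, - 2 * (fM - fm) <= spread * q <= 2 * (fM - fm) -> q = 0)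
    by (intros q Hq; destruct (Z.lt_trichotomy q 0) as [| [|]]; nia).
  destruct (Hall fM F_fM) as (g & g' & Fg & Fg' & _ & Hg).
  destruct (Hall fm F_fm) as (h & h' & Fh & Fh' & _ & Hh).
  pose proof (F_bounds g Fg). pose proof (F_bounds g' Fg').
  pose proof (F_bounds h Fh). pose proof (F_bounds h' Fh').
  assert (h = g) by (enough (h - g = 0) by lia; apply Hzero; lia). subst h.
  assert (Hg' : g' = fM) by lia. subst g'.
  destruct (Hall g Fg) as (k & k' & Fk & Fk' & Hkk' & Hk).
  pose proof (F_bounds k Fk). pose proof (F_bounds k' Fk').
  assert (k = g) by (enough (k - g = 0) by lia; apply Hzero; lia). subst k.
  apply Hkk'. lia.
Qed.

Lemma cover_shift_a j z : lo <= j <= hi -> z mod m = sh (a j) -> sumset C complement z.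
Proof.
  intros Hj Hz.
  assert (Haj := layout_a_range _ _ _ _ _ _ layout j Hj).
  destruct (classic (C0 (z - sh (a j)))) as [HC | HnC].
  - exists (z - sh (a j)), (sh (a j)). repeat split; [left; auto | left; eauto | lia].
  - assert (Hg : (z - sh (a j)) mod m = 0)
      by (rewrite Zminus_mod, Hz, shift_mod, Z.sub_diag; reflexivity).
    destruct (T_gap j Hj _ Hg HnC) as [f [w [Ff [Hfw HT]]]].
    exists f, (sh (a j) + w). repeat split; [right; auto | | lia].
    right; left. exists j. split; [exact Hj | split].
    + replace (sh (a j) + w) with (z - f) by lia. apply mod_sub_F; auto.
    + intros f' Ff'. replace (sh (a j) + w - sh (a j) + f') with (w + f') by ring. auto.
Qed.

Lemma cover_a j z : lo <= j <= hi -> z mod m = a j -> sumset C complement z.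
Proof.
  intros Hj Hz. destruct (a_class j Hj) as [Hfree | Hreach].
  - exists fM, (z - fM). repeat split; [right; auto | | lia].
    right; right; right. rewrite (mod_sub_residue m ft), Hz by auto. exact Hfree.
  - destruct (Hreach z Hz) as [c [Hc HT]].
    exists c, (z - c). repeat split; [left; auto | | lia].
    right; left. exists j. split; [exact Hj | split; [| exact HT]].
    rewrite mod_sub_multiple; auto.
Qed.

Lemma cover_x z : z mod m = x -> sumset C complement z.
Proof.
  intros Hz.
  set (N := Z.abs z + Z.abs (sh x + spread * fm - fM) + 1).
  assert (HN : N <= m * N) by (unfold N; nia).
  exists (m * N), (z - m * N). repeat split; [left; apply C0_nat; lia | | lia].
  right; right; left. split.
  - rewrite mod_sub_multiple; [auto |]. rewrite Z.mul_comm. apply Z_mod_mult.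
  - intros (f & f' & Ff & Ff' & _ & Heq).
    assert (spread * fm <= spread * f)
      by (apply Z.mul_le_mono_nonneg_l; [unfold spread; pose proof (F_bounds fm F_fm); nia
                                        | apply F_bounds, Ff]).
    pose proof (F_bounds f' Ff'). lia.
Qed.

Lemma cover_shift_x z : z mod m = sh x -> sumset C complement z.
Proof.
  intros Hz. destruct (collisions_sparse z) as [f [Ff Hf]].
  exists f, (z - f). repeat split; [right; auto | | lia].
  right; right; left. split; [| exact Hf].
  apply mod_sub_F; auto. apply (layout_x_range _ _ _ _ _ _ layout).
Qed.

Lemma complement_covers z : sumset C complement z.
Proof.
  destruct (classic (occupied m ft lo hi x a (z mod m)))
    as [[Hx | [Hu | [j [Hj [Ha | Hr]]]]] | Hfree].
  - apply cover_x, Hx.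
  - apply cover_shift_x, Hu.
  - apply (cover_a j); auto.
  - apply (cover_shift_a j); auto.
  - exists 0, z. split; [left; rewrite <- (Z.mul_0_r m); apply C0_nat; lia | split; [| lia]].
    right; right; right. exact Hfree.
Qed.

Lemma arises_as_MAC_of_layout : arises_as_MAC C.
Proof.
  exists complement. apply is_MAC_of_private_points; [exact complement_covers |].
  intros c [Hc | Hc]; [apply private_point_C0 | apply private_point_F]; exact Hc.
Qed.

End Construction.

(* Index [j] goes to slot [j mod ft] of block [j / ft]; blocks have length [2 ft], so the
   translates by [ft] fill the second halves of the blocks. *)
Definition block_pos (ft j : Z) : Z := 2 * ft * (j / ft) + j mod ft.

Lemma block_pos_small ft j : 0 <= j < ft -> block_pos ft j = j.
Proof. intros Hj. unfold block_pos. rewrite Z.div_small, Z.mod_small by lia. ring. Qed.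

Lemma block_pos_shift_inj ft j k al be :
  1 <= ft -> 0 <= al <= 1 -> 0 <= be <= 1 ->
  block_pos ft j + ft * al = block_pos ft k + ft * be -> j = k /\ al = be.
Proof.
  intros Hft Hal Hbe Heq. unfold block_pos in Heq.
  pose proof (Z_div_mod_eq_full j ft). pose proof (Z_div_mod_eq_full k ft).
  pose proof (Z.mod_pos_bound j ft ltac:(lia)). pose proof (Z.mod_pos_bound k ft ltac:(lia)).
  assert (Hq : 2 * (j / ft) + al = 2 * (k / ft) + be).
  { set (d := 2 * (j / ft) + al - (2 * (k / ft) + be)).
    assert (Hd : ft * d = k mod ft - j mod ft) by (unfold d; lia).
    destruct (Z.lt_trichotomy d 0) as [| [|]]; nia. }
  assert (al = be) by lia. split; [nia | assumption].
Qed.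

Lemma index_lex_lt ft n j : 1 <= ft -> 0 <= j <= n ->
  j / ft < (n + 1) / ft \/ (j / ft = (n + 1) / ft /\ j mod ft < (n + 1) mod ft).
Proof.
  intros Hft Hj.
  pose proof (Z_div_mod_eq_full j ft). pose proof (Z_div_mod_eq_full (n + 1) ft).
  pose proof (Z.mod_pos_bound j ft ltac:(lia)). pose proof (Z.mod_pos_bound (n + 1) ft ltac:(lia)).
  destruct (Z.lt_trichotomy (j / ft) ((n + 1) / ft)) as [| [|]]; [left | right | exfalso]; nia.
Qed.

Lemma block_pos_range ft n j : 1 <= ft -> 0 <= j <= n ->
  0 <= block_pos ft j /\
  block_pos ft j + ft < ft + 2 * ft * ((n + 1) / ft) + (n + 1) mod ft.
Proof.
  intros Hft Hj. unfold block_pos.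
  pose proof (Z.mod_pos_bound j ft ltac:(lia)).
  pose proof (Z.mod_pos_bound (n + 1) ft ltac:(lia)).
  assert (0 <= j / ft) by (apply Z.div_pos; lia).
  assert (0 <= (n + 1) / ft) by (apply Z.div_pos; lia).
  destruct (index_lex_lt ft n j Hft Hj) as [Hq | [-> ?]]; [| nia].
  assert (ft * (j / ft) <= ft * ((n + 1) / ft - 1)) by (apply Z.mul_le_mono_nonneg_l; lia).
  lia.
Qed.

(* Above the first [2 ft ((n+1)/ft) + (n+1) mod ft] positions, only the translates of the
   last, partial block are occupied. *)
Lemma block_pos_above ft n j p : 1 <= ft -> 0 <= j <= n ->
  2 * ft * ((n + 1) / ft) + (n + 1) mod ft <= p ->
  p < 2 * ft * ((n + 1) / ft) + ft \/ 2 * ft * ((n + 1) / ft) + ft + (n + 1) mod ft <= p ->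
  p <> block_pos ft j /\ p <> block_pos ft j + ft.
Proof.
  intros Hft Hj Hlow Hp. unfold block_pos.
  pose proof (Z.mod_pos_bound j ft ltac:(lia)).
  pose proof (Z.mod_pos_bound (n + 1) ft ltac:(lia)).
  destruct (index_lex_lt ft n j Hft Hj) as [Hq | [-> ?]]; [| lia].
  assert (ft * (j / ft) <= ft * ((n + 1) / ft - 1)) by (apply Z.mul_le_mono_nonneg_l; lia).
  lia.
Qed.

Definition swap (i k j : Z) : Z :=
  if Z.eq_dec j i then k else if Z.eq_dec j k then i else j.

Lemma swap_range lo hi i k j :
  lo <= i <= hi -> lo <= k <= hi -> lo <= j <= hi -> lo <= swap i k j <= hi.
Proof. unfold swap. destruct (Z.eq_dec j i), (Z.eq_dec j k); lia. Qed.

Lemma swap_inj i k j j' : swap i k j = swap i k j' -> j = j'.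
Proof. unfold swap. destruct (Z.eq_dec j i), (Z.eq_dec j k), (Z.eq_dec j' i), (Z.eq_dec j' k); lia. Qed.

Lemma block_pos_shift m ft n j :
  1 <= ft -> 0 <= j <= n -> ft + 2 * ft * ((n + 1) / ft) + (n + 1) mod ft <= m ->
  shift m ft (block_pos ft j) = block_pos ft j + ft.
Proof.
  intros Hft Hj Hm. apply Z.mod_small.
  pose proof (block_pos_range ft n j Hft Hj). lia.
Qed.

Lemma block_layout m ft n (sigma : Z -> Z) :
  1 <= ft -> 0 <= n -> ft + 2 * ft * ((n + 1) / ft) + (n + 1) mod ft <= m ->
  (forall j, 0 <= j <= n -> 0 <= sigma j <= n) ->
  (forall j k, 0 <= j <= n -> 0 <= k <= n -> sigma j = sigma k -> j = k) ->
  residue_layout m ft 1 n (block_pos ft (sigma 0)) (fun j => block_pos ft (sigma j)).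
Proof.
  intros Hft Hn Hm Hrange Hinj.
  assert (Hpos : forall j, 0 <= j <= n -> 0 <= block_pos ft (sigma j) /\ block_pos ft (sigma j) + ft < m)
    by (intros j Hj; pose proof (block_pos_range ft n (sigma j) Hft (Hrange j Hj)); lia).
  assert (Hsh : forall j, 0 <= j <= n -> shift m ft (block_pos ft (sigma j)) = block_pos ft (sigma j) + ft)
    by (intros j Hj; apply (block_pos_shift m ft n); auto).
  assert (Hdisj : forall j k al be, 0 <= j <= n -> 0 <= k <= n -> 0 <= al <= 1 -> 0 <= be <= 1 ->
            block_pos ft (sigma j) + ft * al = block_pos ft (sigma k) + ft * be -> j = k /\ al = be).
  { intros j k al be Hj Hk Hal Hbe Heq.
    destruct (block_pos_shift_inj ft _ _ al be Hft Hal Hbe Heq). split; [apply Hinj |]; auto. }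
  split; cbn beta.
  - pose proof (Hpos 0 ltac:(lia)); lia.
  - intros j Hj. pose proof (Hpos j ltac:(lia)); lia.
  - intros j k Hj Hk Heq. apply (Hdisj j k 0 0); lia.
  - intros j Hj Heq. destruct (Hdisj j 0 0 0); lia.
  - rewrite Hsh by lia. intro Heq. destruct (Hdisj 0 0 0 1); lia.
  - intros j Hj. rewrite Hsh by lia. intro Heq. destruct (Hdisj 0 j 0 1); lia.
  - intros j Hj. rewrite Hsh by lia. intro Heq. destruct (Hdisj j 0 0 1); lia.
  - intros j k Hj Hk. rewrite Hsh by lia. intro Heq. destruct (Hdisj j k 0 1); lia.
Qed.

(* The pivot [i0] is placed at slot [js] of the first block, chosen so that the class
   [m - ft + js] of [a i0 - ft] lies above the layout and outside the translates of its last
   block.  This is possible unless [m = 2 ft] and everything fits in one half-block. *)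
Lemma block_layout_free_pivot m ft n i0 :
  1 <= ft -> 1 <= i0 <= n -> ft + 2 * ft * ((n + 1) / ft) + (n + 1) mod ft <= m ->
  (exists x a, residue_layout m ft 1 n x a /\ ~ occupied m ft 1 n x a ((a i0 - ft) mod m))
  \/ (m = 2 * ft /\ n + 2 <= ft).
Proof.
  intros Hft Hi0 Hm.
  pose proof (Z_div_mod_eq_full (n + 1) ft). pose proof (Z.mod_pos_bound (n + 1) ft ltac:(lia)).
  pose proof (Z.mod_le (n + 1) ft ltac:(lia) ltac:(lia)).
  assert (0 <= (n + 1) / ft) by (apply Z.div_pos; lia).
  set (q := (n + 1) / ft) in *. set (s := (n + 1) mod ft) in *.
  set (t := m - ft - 2 * ft * q - s).
  assert (Hjs : exists js, 0 <= js <= s /\ (js = 0 \/ t + js = ft) /\ (s + t + js < ft \/ ft <= t + js)).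
  { destruct (Z_lt_le_dec (s + t) ft); [exists 0; lia |].
    destruct (Z_lt_le_dec t ft); [exists (ft - t) | exists 0]; lia. }
  destruct Hjs as [js (Hjs & Hjs0 & Hjst)].
  destruct (Z_le_gt_dec js n) as [Hjn | Hjn]; [left | right; nia].
  set (sigma := swap i0 js).
  assert (Hsig : forall j, 0 <= j <= n -> 0 <= sigma j <= n) by (intros; apply swap_range; lia).
  exists (block_pos ft (sigma 0)), (fun j => block_pos ft (sigma j)). split.
  - apply block_layout; auto; [lia | intros j k _ _; apply swap_inj].
  - cbn beta.
    assert (Hi0js : block_pos ft (sigma i0) = js).
    { unfold sigma, swap. destruct (Z.eq_dec i0 i0) as [_ | []]; [| reflexivity].
      apply block_pos_small. lia. }
    assert (Hp : (js - ft) mod m = m - ft + js) by (symmetry; apply (Z.mod_unique _ _ (-1)); lia).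
    rewrite Hi0js, Hp.
    assert (Hfree : forall j, 0 <= j <= n ->
              m - ft + js <> block_pos ft (sigma j) /\ m - ft + js <> block_pos ft (sigma j) + ft)
      by (intros j Hj; apply (block_pos_above ft n); auto; fold q s; lia).
    assert (Hsh : forall j, 0 <= j <= n ->
              shift m ft (block_pos ft (sigma j)) = block_pos ft (sigma j) + ft)
      by (intros j Hj; apply (block_pos_shift m ft n); auto).
    intros [Hx | [Hu | [j [Hj [Ha | Hr]]]]].
    + destruct (Hfree 0); lia.
    + rewrite Hsh in Hu by lia. destruct (Hfree 0); lia.
    + destruct (Hfree j); lia.
    + rewrite Hsh in Hr by lia. destruct (Hfree j); lia.
Qed.

Lemma half_block_layout ft n : 0 <= n -> n + 2 <= ft ->
  residue_layout (2 * ft) ft 0 n (n + 1) (fun j => j).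
Proof.
  intros Hn Hft.
  assert (Hsh : forall j, 0 <= j <= n + 1 -> shift (2 * ft) ft j = j + ft)
    by (intros; apply Z.mod_small; lia).
  split; intros; rewrite ?Hsh; lia.
Qed.

Section Theorem8.

Variables (m ft n fm fM : Z) (B F : zset) (S : Z -> zset).

Hypothesis m_ge2 : 2 <= m.
Hypothesis B_mult : forall b, B b -> mult_int m b.
Hypothesis ft_range : 1 <= ft <= m - 1.
Hypothesis F_mod : forall f, F f -> f mod m = ft.
Hypotheses (F_fm : F fm) (F_fM : F fM) (F_bounds : forall f, F f -> fm <= f <= fM).
Hypothesis n_pos : 1 <= n.
Hypothesis S_union : forall z, (exists i, 1 <= i <= n /\ S i z) <-> (mult_nat m z \/ B z).
Hypothesis S_complement : forall i, 1 <= i <= n ->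
  exists Wi : zset, forall z, (mult_int m z /\ ~ S i z) <-> sumset F Wi z.
Hypothesis budget : m >= ft + 2 * ft * ((n + 1) / ft) + (n + 1) mod ft.

Definition C0 : zset := fun z => mult_nat m z \/ B z.

Lemma C0_mult c : C0 c -> mult_int m c.
Proof. intros [[k [_ ->]] | Hb]; [exists k; reflexivity | apply B_mult, Hb]. Qed.

Lemma C0_mod c : C0 c -> c mod m = 0.
Proof. intros Hc. apply mult_int_mod, C0_mult, Hc. Qed.

Lemma C0_nat k : 0 <= k -> C0 (m * k).
Proof. intros Hk. left. exists k. auto. Qed.

Lemma S_sub_C0 i z : 1 <= i <= n -> S i z -> C0 z.
Proof. intros Hi Hz. apply S_union. eauto. Qed.

Lemma S_complement_decomp i g : 1 <= i <= n -> mult_int m g -> ~ S i g ->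
  exists f w, F f /\ g = f + w /\ forall f', F f' -> ~ S i (w + f').
Proof.
  intros Hi Hg HSg. destruct (S_complement i Hi) as [Wi HWi].
  destruct (proj1 (HWi g) (conj Hg HSg)) as [f [w [Ff [Ww Hgw]]]].
  exists f, w. split; [exact Ff | split; [exact Hgw |]].
  intros f' Ff' HS. apply (HWi (w + f')); [exists f', w; repeat split; auto; lia | exact HS].
Qed.

Lemma gap_decomposition i (T : zset) : 1 <= i <= n -> (forall z, T z -> S i z) ->
  forall g, g mod m = 0 -> ~ C0 g ->
  exists f w, F f /\ g = f + w /\ forall f', F f' -> ~ T (w + f').
Proof.
  intros Hi HT g Hg HC.
  destruct (S_complement_decomp i g Hi) as [f [w [Ff [Hgw Hw]]]].
  - exists (g / m). apply Z.div_exact; lia.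
  - intro HS. apply HC, (S_sub_C0 i); auto.
  - exists f, w. split; [exact Ff | split; [exact Hgw |]]. intros f' Ff' HTw. apply (Hw f' Ff'), HT, HTw.
Qed.

Definition avoidable_below (T : zset) : Prop :=
  forall L, exists v, v < L /\ (v + ft) mod m = 0 /\ forall f, F f -> ~ T (v + f).

Definition full_below (i : Z) : Prop := exists K, forall z, mult_int m z -> z < K -> S i z.

Lemma avoidable_of_not_full_below i (T : zset) : 1 <= i <= n -> ~ full_below i ->
  (forall z, T z -> S i z) -> avoidable_below T.
Proof.
  intros Hi Hfull HT L.
  assert (Hg : exists g, mult_int m g /\ g < L + fm /\ ~ S i g).
  { apply NNPP. intro Hno. apply Hfull. exists (L + fm). intros z Hz HzL.
    apply NNPP. intro. apply Hno. eauto. }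
  destruct Hg as [g [Hg [HgL HSg]]].
  destruct (S_complement_decomp i g Hi Hg HSg) as [f [w [Ff [Hgw Hw]]]].
  exists w. split; [pose proof (F_bounds f Ff); lia | split].
  - replace (w + ft) with (g - (f - ft)) by lia.
    rewrite mod_sub_multiple; [apply mult_int_mod, Hg |].
    rewrite Zminus_mod, (F_mod f Ff), (Z.mod_small ft m), Z.sub_diag by lia. reflexivity.
  - intros f' Ff' HTw. apply (Hw f' Ff'), HT, HTw.
Qed.

Lemma avoidable_of_bounded_below (T : zset) : (exists K, forall t, T t -> K <= t) -> avoidable_below T.
Proof.
  intros [K HK] L.
  set (N := Z.abs L + Z.abs K + Z.abs fM + Z.abs ft + 1).
  assert (HN : N <= m * N) by (unfold N; nia).
  exists (- ft - m * N). split; [unfold N in *; lia | split].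
  - replace (- ft - m * N + ft) with ((- N) * m) by ring. apply Z_mod_mult.
  - intros f Ff HT. apply HK in HT. pose proof (F_bounds f Ff). unfold N in *. lia.
Qed.

Lemma reachable_of_avoidable (T : zset) v : avoidable_below T -> reachable m ft C0 F T v.
Proof.
  intros Havoid y Hy.
  destruct (Havoid (y - shift m ft v)) as [w [HwL [Hw HT]]].
  exists (y - shift m ft v - w). split.
  - assert (Hc : (y - shift m ft v - w) mod m = 0).
    { replace (y - shift m ft v - w) with ((y + ft - shift m ft v) - (w + ft)) by ring.
      rewrite mod_sub_multiple by exact Hw.
      rewrite Zminus_mod, <- Zplus_mod_idemp_l, Hy, shift_mod, Z.sub_diag. reflexivity. }
    apply Z.div_exact in Hc; [| lia]. rewrite Hc. apply C0_nat, Z.div_pos; lia.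
  - intros f Ff. replace (y - (y - shift m ft v - w) - shift m ft v + f) with (w + f) by ring. auto.
Qed.

Lemma reachable_of_bounded_above (T : zset) v :
  (exists K, forall t, T t -> t < K) -> (forall L, exists c, C0 c /\ c < L) ->
  reachable m ft C0 F T v.
Proof.
  intros [K HK] Hunb y _.
  destruct (Hunb (y - shift m ft v + fm - K)) as [c [Hc HcL]].
  exists c. split; [exact Hc |]. intros f Ff HT. apply HK in HT. pose proof (F_bounds f Ff). lia.
Qed.

Lemma pivot_exists : exists i0, 1 <= i0 <= n /\
  (full_below i0 \/ forall i, 1 <= i <= n -> ~ full_below i).
Proof.
  destruct (classic (exists i, 1 <= i <= n /\ full_below i)) as [[i [Hi Hfull]] | Hnone].
  - exists i. auto.
  - exists 1. split; [lia |]. right. intros i Hi Hfull. apply Hnone. eauto.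
Qed.

Section Pivot.

Variable i0 : Z.
Hypothesis i0_range : 1 <= i0 <= n.
Hypothesis i0_pivot : full_below i0 \/ forall i, 1 <= i <= n -> ~ full_below i.

Lemma reachable_off_pivot j v : 1 <= j <= n ->
  reachable m ft C0 F (fun z => S j z /\ ~ S i0 z) v.
Proof.
  intros Hj. apply reachable_of_avoidable. destruct i0_pivot as [[K HK] | Hnone].
  - apply avoidable_of_bounded_below. exists K. intros t [Ht Hnt].
    apply Z.nlt_ge. intro. apply Hnt, HK; [apply C0_mult, (S_sub_C0 j) |]; auto.
  - apply (avoidable_of_not_full_below j); auto. intros z [Hz _]; exact Hz.
Qed.

Lemma free_pivot_arises_as_MAC x a :
  residue_layout m ft 1 n x a -> ~ occupied m ft 1 n x a ((a i0 - ft) mod m) ->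
  arises_as_MAC (fun z => C0 z \/ F z).
Proof.
  intros Hlayout Hfree.
  set (T := fun j z => if Z.eq_dec j i0 then S i0 z else S j z /\ ~ S i0 z).
  apply (arises_as_MAC_of_layout m ft 1 n x fm fM a C0 F T); auto;
    [lia | exact C0_mod | exact C0_nat | | |].
  - intros c Hc. destruct (proj2 (S_union c) Hc) as [i [Hi HS]].
    destruct (classic (S i0 c)) as [H0 | H0]; [exists i0 | exists i]; split; auto; unfold T.
    + destruct (Z.eq_dec i0 i0) as [_ | []]; auto.
    + destruct (Z.eq_dec i i0) as [-> | _]; [contradiction | auto].
  - intros j Hj. apply (gap_decomposition j); auto.
    intros z. unfold T. destruct (Z.eq_dec j i0) as [-> | _]; tauto.
  - intros j Hj. unfold T. destruct (Z.eq_dec j i0) as [-> | _]; [left; exact Hfree |].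
    right. apply reachable_off_pivot, Hj.
Qed.

(* With [m = 2 ft] no class is free, so [S i0] is split at [0] and its nonnegative part gets
   the extra index [0]. *)
Lemma split_pivot_arises_as_MAC : m = 2 * ft -> n + 2 <= ft ->
  arises_as_MAC (fun z => C0 z \/ F z).
Proof.
  intros Hm Hft.
  set (T := fun j z => if Z.eq_dec j 0 then S i0 z /\ 0 <= z
                       else if Z.eq_dec j i0 then S i0 z /\ z < 0
                       else S j z /\ ~ S i0 z).
  apply (arises_as_MAC_of_layout m ft 0 n (n + 1) fm fM (fun j => j) C0 F T); auto;
    [lia | exact C0_mod | exact C0_nat | rewrite Hm; apply half_block_layout; lia | | |].
  - intros c Hc. destruct (proj2 (S_union c) Hc) as [i [Hi HS]].
    destruct (classic (S i0 c)) as [H0 | H0]; [destruct (Z_le_gt_dec 0 c) |];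
      [exists 0 | exists i0 | exists i]; split; try lia; unfold T.
    + destruct (Z.eq_dec 0 0) as [_ | []]; auto.
    + destruct (Z.eq_dec i0 0); [lia |]. destruct (Z.eq_dec i0 i0) as [_ | []]; split; auto; lia.
    + destruct (Z.eq_dec i 0); [lia |]. destruct (Z.eq_dec i i0) as [-> | _]; [contradiction | auto].
  - intros j Hj.
    assert (HTS : exists i, 1 <= i <= n /\ forall z, T j z -> S i z).
    { unfold T. destruct (Z.eq_dec j 0); [| destruct (Z.eq_dec j i0)];
        [exists i0 | exists i0 | exists j]; split; solve [lia | intros z []; auto]. }
    destruct HTS as [i [Hi HTS]]. apply (gap_decomposition i); auto.
  - intros j Hj. right. unfold T. destruct (Z.eq_dec j 0) as [-> | Hj0].
    + apply reachable_of_avoidable, avoidable_of_bounded_below. exists 0. intros t []; auto.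
    + destruct (Z.eq_dec j i0) as [-> | Hji0]; [| apply reachable_off_pivot; lia].
      destruct i0_pivot as [[K HK] | Hnone].
      * apply reachable_of_bounded_above; [exists 0; intros t []; auto |].
        intros L. set (N := Z.abs L + Z.abs K + 1).
        assert (HN : N <= m * N) by (unfold N; nia).
        exists (m * (- N)). split; [| unfold N in *; lia].
        apply (S_sub_C0 i0); auto. apply HK; [exists (- N); auto | unfold N in *; lia].
      * apply reachable_of_avoidable, (avoidable_of_not_full_below i0); auto.
        intros z []; auto.
Qed.

End Pivot.

Lemma C0_F_arises_as_MAC : arises_as_MAC (fun z => C0 z \/ F z).
Proof.
  destruct pivot_exists as [i0 [Hi0 Hpivot]].
  destruct (block_layout_free_pivot m ft n i0) as [[x [a [Hlayout Hfree]]] | [Hm Hft]];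
    try lia.
  - apply (free_pivot_arises_as_MAC i0 Hi0 Hpivot x a); auto.
  - apply (split_pivot_arises_as_MAC i0); auto.
Qed.

End Theorem8.

Theorem theorem8 (m : Z) (B F : zset) (ft : Z) (n : Z) (S : Z -> zset) :
  2 <= m ->
  (forall b, B b -> mult_int m b) ->
  ~ finite_set B ->
  finite_set F -> (exists f, F f) ->
  1 <= ft <= m - 1 ->
  (forall f, F f -> f mod m = ft) ->
  1 <= n ->
  (forall x, (exists i, 1 <= i <= n /\ S i x) <-> (mult_nat m x \/ B x)) ->
  (forall i, 1 <= i <= n ->
     exists Wi : zset, forall x, (mult_int m x /\ ~ S i x) <-> sumset F Wi x) ->
  m >= ft + 2 * ft * ((n + 1) / ft) + (n + 1) mod ft ->
  arises_as_MAC (fun x => mult_nat m x \/ B x \/ F x).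
Proof.
  intros Hm HB _ HFfin HFne Hft HFm Hn HS HW Hbudget.
  destruct (finite_set_min F HFfin HFne) as [fm [Hfm Hfm_le]].
  destruct (finite_set_max F HFfin HFne) as [fM [HfM HfM_ge]].
  apply (arises_as_MAC_ext (fun z => C0 m B z \/ F z)); [intro z; unfold C0; tauto |].
  apply (C0_F_arises_as_MAC m ft n fm fM B F S); auto.
Qed.
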